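(* Let $G$ be an embedded planar graph whose edge set $E$ consists of line segments, let $\mathcal{R}_{W_0}$ be a finite set of disjoint fat regions contained in a root window $W_0$, let $W\subseteq W_0$ be any window, and let $m,M$ be positive integers. Then there exists a favorable cut of $W$, i.e., an axis-parallel cut $\ell$ of $W$ whose chargeable length is at least $|\sigma_m(\ell)|+|\Sigma_M(\ell)|$.
   Context: A window is an axis-aligned rectangle; a cut of $W$ is an axis-parallel line $\ell$ intersecting $W$. The $m$-span $\sigma_m(\ell)$: the set $\ell\cap(E\cap\mathrm{int}(W))$ consists of subsegments (possibly points) of $\ell$; let $p_1,\dots,p_\xi$ be their endpoints in order along $\ell$. If $\xi\le 2(m-1)$, $\sigma_m(\ell)=\emptyset$; otherwise $\sigma_m(\ell)$ is the segment $p_mp_{\xi-m+1}$. The $M$-region-span $\Sigma_M(\ell)$: let $ab=\ell\cap W$ and let $\xi'$ be the number of axis-aligned bounding boxes of regions of $\mathcal{R}_{W_0}$ that $ab$ crosses (not counting boxes containing the endpoints $a$ or $b$). If $\xi'<2M-1$, $\Sigma_M(\ell)=\emptyset$; otherwise $\Sigma_M(\ell)$ is the segment $a_Mb_M$ on $\ell$, where $a_M$ is the $M$th point at which $ab$ enters a bounding box when traversed from $a$ toward $b$, and $b_M$ is the $M$th such entry point when traversed from $b$ toward $a$. $|\cdot|$ denotes length. A point $p\in W$ is $m$-dark with respect to horizontal cuts if the upward and downward vertical rays from $p$ each cross at least $m$ edges of $E$ before reaching $\partial W$, and $M$-region-dark with respect to horizontal cuts if these rays each cross at least $M$ bounding boxes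 of regions of $\mathcal{R}_{W_0}$ before reaching $\partial W$; darkness with respect to vertical cuts is defined analogously with horizontal rays. The chargeable length of a horizontal (resp. vertical) cut $\ell$ is the length of the set of points of $\ell\cap W$ that are $m$-dark with respect to horizontal (resp. vertical) cuts plus the length of the set of points of $\ell\cap W$ that are $M$-region-dark with respect to horizontal (resp. vertical) cuts. A region $P$ is fat if $\mathrm{area}(P)\ge\alpha[\mathrm{diam}(P)]^2$ for a fixed constant $\alpha>0$. *)

From HB Require Import structures.
From mathcomp Require Import all_boot all_order all_algebra.
From mathcomp Require Import all_classical all_reals all_analysis.
Set Implicit Arguments. Unset Strict Implicit. Unset Printing Implicit Defensive.
Import Order.TTheory GRing.Theory Num.Theory.
Import numFieldNormedType.Exports.
Local Open Scope classical_set_scope.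
Local Open Scope ring_scope.

Section Geometry.
Variable R : realType.

Definition pt2 := (R * R)%type.
Definition edge := (pt2 * pt2)%type.

Definition seg (e : edge) : set pt2 :=
  [set p | exists t : R, 0 <= t <= 1 /\
     p = ((1 - t) * e.1.1 + t * e.2.1, (1 - t) * e.1.2 + t * e.2.2)].

Definition planar_straight_line (E : seq edge) : Prop :=
  uniq E /\ (forall e, e \in E -> e.1 != e.2) /\
  forall e e', e \in E -> e' \in E -> e != e' ->
    forall p, seg e p -> seg e' p ->
      (p = e.1 \/ p = e.2) /\ (p = e'.1 \/ p = e'.2).

Record window := Window { wx1 : R; wx2 : R; wy1 : R; wy2 : R }.

Definition window_wf (W : window) : Prop := wx1 W < wx2 W /\ wy1 W < wy2 W.

Definition inW (W : window) : set pt2 :=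
  [set p | wx1 W <= p.1 <= wx2 W /\ wy1 W <= p.2 <= wy2 W].

Definition intW (W : window) : set pt2 :=
  [set p | wx1 W < p.1 < wx2 W /\ wy1 W < p.2 < wy2 W].

Definition subwindow (W W0 : window) : Prop := inW W `<=` inW W0.

Definition pdist (p q : pt2) : R := Num.sqrt ((p.1 - q.1) ^+ 2 + (p.2 - q.2) ^+ 2).

Definition diam (P : set pt2) : R :=
  sup [set d | exists p q, P p /\ P q /\ d = pdist p q].

Definition area (P : set pt2) : \bar R :=
  ((@lebesgue_measure R) \x (@lebesgue_measure R))%E P.

Definition region (P : set pt2) : Prop :=
  P !=set0 /\ measurable P /\
  exists r : R, forall p, P p -> `|p.1| <= r /\ `|p.2| <= r.

Definition fat (alpha : R) (P : set pt2) : Prop :=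
  ((alpha * diam P ^+ 2)%:E <= area P)%E.

Definition bbox (P : set pt2) : set pt2 :=
  [set p | inf (fst @` P) <= p.1 <= sup (fst @` P) /\
           inf (snd @` P) <= p.2 <= sup (snd @` P)].

(* A cut is described by an orientation h (true = horizontal line y = c,
   false = vertical line x = c) and its position c.  For a cut of
   orientation h, "along" coordinates t parametrize the line and "across"
   coordinates s are perpendicular to it. *)
Definition mkpt (h : bool) (t s : R) : pt2 := if h then (t, s) else (s, t).
Definition alo (h : bool) (W : window) : R := if h then wx1 W else wy1 W.
Definition ahi (h : bool) (W : window) : R := if h then wx2 W else wy2 W.
Definition clo (h : bool) (W : window) : R := if h then wy1 W else wx1 W.
Definition chi (h : bool) (W : window) : R := if h then wy2 W else wx2 W.

Definition is_cut (W : window) (h : bool) (c : R) : Prop := clo h W <= c <= chi h W.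

Definition atleast (T : eqType) (n : nat) (P : T -> Prop) : Prop :=
  exists s : seq T, uniq s /\ (n <= size s)%N /\ forall x, x \in s -> P x.

Definition cutE (E : seq edge) (W : window) (h : bool) (c : R) : set R :=
  [set t | intW W (mkpt h t c) /\ exists e, e \in E /\ seg e (mkpt h t c)].

(* endpoints of the subsegments forming a subset S of the line: its frontier *)
Definition endpts (S : set R) : set R := closure S `\` interior S.

(* m-span (along-coordinates): the segment p_m p_{xi-m+1}, empty when
   xi <= 2(m-1); t lies in it iff at least m endpoints are <= t and at least
   m endpoints are >= t. *)
Definition mspan (m : nat) (E : seq edge) (W : window) (h : bool) (c : R) : set R :=
  [set t | atleast m (fun x => endpts (cutE E W h c) x /\ x <= t) /\
           atleast m (fun x => endpts (cutE E W h c) x /\ t <= x)].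

Definition crossed k (P : 'I_k -> set pt2) (W : window) (h : bool) (c : R)
    (i : 'I_k) : Prop :=
  (exists t, alo h W <= t <= ahi h W /\ bbox (P i) (mkpt h t c)) /\
  ~ bbox (P i) (mkpt h (alo h W) c) /\ ~ bbox (P i) (mkpt h (ahi h W) c).

Definition box_on_cut k (P : 'I_k -> set pt2) (W : window) (h : bool) (c : R)
    (i : 'I_k) : set R :=
  [set t | alo h W <= t <= ahi h W /\ bbox (P i) (mkpt h t c)].

(* pt2 where ab enters box i, traversing from a to b, resp. from b to a *)
Definition entry_a k (P : 'I_k -> set pt2) W h c i : R := inf (box_on_cut P W h c i).
Definition entry_b k (P : 'I_k -> set pt2) W h c i : R := sup (box_on_cut P W h c i).

(* M-region-span (along-coordinates): empty if xi' < 2M-1, else a_M b_M,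
   with entry points counted box by box *)
Definition rspan (M : nat) k (P : 'I_k -> set pt2) (W : window) (h : bool) (c : R)
    : set R :=
  [set t | atleast (2 * M - 1) (crossed P W h c) /\
    atleast M (fun i => crossed P W h c i /\ entry_a P W h c i <= t) /\
    atleast M (fun i => crossed P W h c i /\ t <= entry_b P W h c i)].

(* darkness with respect to cuts of orientation h, of the pt2 of along-
   coordinate t on the line of orientation h at position c; the rays are
   perpendicular to the cut and stop at the boundary of W *)
Definition ray_up (W : window) (h : bool) (c : R) : set R := [set s | c < s < chi h W].
Definition ray_down (W : window) (h : bool) (c : R) : set R := [set s | clo h W < s < c].

Definition mdark (m : nat) (E : seq edge) (W : window) (h : bool) (c t : R) : Prop :=
  intW W (mkpt h t c) /\
  atleast m (fun e => e \in E /\ exists s, ray_up W h c s /\ seg e (mkpt h t s)) /\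
  atleast m (fun e => e \in E /\ exists s, ray_down W h c s /\ seg e (mkpt h t s)).

Definition Mrdark (M : nat) k (P : 'I_k -> set pt2) (W : window) (h : bool) (c t : R)
    : Prop :=
  intW W (mkpt h t c) /\
  atleast M (fun i => exists s, ray_up W h c s /\ bbox (P i) (mkpt h t s)) /\
  atleast M (fun i => exists s, ray_down W h c s /\ bbox (P i) (mkpt h t s)).

Definition chargeable (m M : nat) (E : seq edge) k (P : 'I_k -> set pt2)
    (W : window) (h : bool) (c : R) : \bar R :=
  (lebesgue_measure [set t | mdark m E W h c t] +
   lebesgue_measure [set t | Mrdark M P W h c t])%E.

Definition favorable (m M : nat) (E : seq edge) k (P : 'I_k -> set pt2)
    (W : window) (h : bool) (c : R) : Prop :=
  is_cut W h c /\
  (lebesgue_measure (mspan m E W h c) + lebesgue_measure (rspan M P W h c)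
     <= chargeable m M E P W h c)%E.

End Geometry.

(* Suppose that no cut is favorable.  Call a point t of the cut of orientation g at
   position c deep if at least m edges of E cross the cut inside W on each side of t,
   and box-deep if at least M bounding boxes do.  Up to finitely many points, the spans
   sigma_m and Sigma_M of a cut lie within its deep, resp. box-deep, points; and a point
   that is deep on its own cut is dark with respect to the perpendicular cuts.  Let D_g
   be the set of pairs (c, t) with t deep on the g-cut at c (counted once for edges,
   once for boxes).  For every g-cut avoiding the finitely many vertex positions,
   non-favorability gives
     |{points of the cut deep on their perpendicular cut}| <= chargeable length
        < |sigma_m| + |Sigma_M| <= |{points deep on the cut}|,
   and integrating over c with Fubini yields area(D_(~g)) < area(D_g) for both
   orientations, which is absurd. *)

From HB Require Import structures.
From mathcomp Require Import all_boot all_order all_algebra.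
From mathcomp Require Import all_classical all_reals all_analysis.
From mathcomp Require Import ring lra measurable_realfun.
Set Implicit Arguments. Unset Strict Implicit. Unset Printing Implicit Defensive.
Import Order.TTheory GRing.Theory Num.Theory.
Import numFieldNormedType.Exports.
Local Open Scope classical_set_scope.
Local Open Scope ring_scope.

Section measurable_bool.
Context d (T : measurableType d) (R : realType).

Lemma measurable_set_bool (b : T -> bool) :
  measurable_fun setT b -> measurable [set x | b x].
Proof. by move=> mb; rewrite -[X in measurable X]setTI; exact: mb. Qed.

Lemma measurable_fun_mem (D : set T) (f : T -> R) (s : seq R) :
  measurable_fun D f -> measurable_fun D (fun x => f x \in s).
Proof.
move=> mf; elim: s => [|y s IHs]; first exact: measurable_cst.
under eq_fun do rewrite in_cons.
by apply: measurable_or => //; exact: measurable_fun_eqr.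
Qed.

Lemma measurable_fun_sumn (I : Type) (r : seq I) (F : I -> T -> nat) :
  (forall i, measurable_fun setT (F i)) ->
  measurable_fun setT (fun x => \sum_(i <- r) F i x)%N.
Proof.
move=> mF; elim: r => [|i r IHr].
  by under eq_fun do rewrite big_nil; exact: measurable_cst.
by under eq_fun do rewrite big_cons; exact: measurable_fun_addn.
Qed.

Lemma measurable_fun_card (I : finType) (b : I -> T -> bool) :
  (forall i, measurable_fun setT (b i)) ->
  measurable_fun setT (fun x => #|[pred i | b i x]|).
Proof.
move=> mb.
have -> : (fun x => #|[pred i | b i x]|) =
          (fun x => \sum_(i <- enum I) if b i x then 1 else 0)%N.
  by apply/funext => x; rewrite -sum1_card big_mkcond big_enum.
by apply: measurable_fun_sumn => i; exact: measurable_fun_ifT.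
Qed.

End measurable_bool.

Section integral_comparison.
Local Open Scope ereal_scope.
Context d (T : measurableType d) (R : realType).
Variable mu : {measure set T -> \bar R}.

Lemma integral_lt_pinfty_indic (f : T -> \bar R) (A : set T) (K : R) :
  measurable A -> mu A < +oo -> (0 <= K)%R -> measurable_fun setT f ->
  (forall x, 0 <= f x) -> (forall x, f x <= K%:E * (\1_A x)%:E) ->
  \int[mu]_x f x < +oo.
Proof.
move=> mA muA K0 mf f0 fK.
have mi : measurable_fun setT (fun x => (\1_A x)%:E : \bar R).
  by apply/measurable_EFinP; exact: measurable_indic.
apply: (le_lt_trans (ge0_le_integral mu measurableT (fun x _ => f0 x) mf _
  (fun x _ => fK x))); first exact: emeasurable_funM mi.
have i0 (x : T) : [set: T] x -> 0 <= (\1_A x : R)%:E by rewrite lee_fin.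
rewrite (ge0_integralZl mu measurableT mi i0) ?lee_fin // integral_indic //.
by rewrite setIT; apply: lte_mul_pinfty; rewrite ?lee_fin.
Qed.

Lemma ge0_lt_integral (f g : T -> \bar R) (D : set T) :
  measurable_fun setT f -> measurable_fun setT g ->
  (forall x, 0 <= f x) -> (forall x, f x \is a fin_num) ->
  \int[mu]_x f x < +oo -> (forall x, f x <= g x) ->
  measurable D -> 0 < mu D -> (forall x, D x -> f x < g x) ->
  \int[mu]_x f x < \int[mu]_x g x.
Proof.
move=> mf mg f0 ffin intf fg mD muD fgD.
rewrite ltNge; apply/negP => intgf.
pose h x := g x - f x.
have h0 x : 0 <= h x by rewrite suber_ge0.
have mh : measurable_fun setT h by exact: emeasurable_funB.
have intg : \int[mu]_x g x = \int[mu]_x f x + \int[mu]_x h x.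
  rewrite -ge0_integralD //; apply: eq_integral => x _.
  by rewrite /h addeC subeK.
have inth : \int[mu]_x h x = 0.
  apply/eqP; rewrite eq_le integral_ge0 // andbT leNgt; apply/negP => inth.
  move: intgf; rewrite intg leNgt lteDl ?inth //.
  by rewrite ge0_fin_numE // integral_ge0.
have [N [mN muN hN]] : ae_eq mu setT h (cst 0).
  apply/(ae_eq_integral_abs mu measurableT mh); rewrite -inth.
  by apply: eq_integral => x _; rewrite gee0_abs.
have : mu D <= mu N.
  apply: le_measure; rewrite ?inE // => x Dx; apply: hN => /(_ I) hx.
  by move: (fgD x Dx); rewrite -sube_gt0 -/(h x) hx ltxx.
by rewrite muN leNgt muD.
Qed.

End integral_comparison.

Section measure_slices.
Local Open Scope ereal_scope.
Context d1 d2 (T1 : measurableType d1) (T2 : measurableType d2) (R : realType).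
Variable mu1 : {sigma_finite_measure set T1 -> \bar R}.
Variable mu2 : {sigma_finite_measure set T2 -> \bar R}.
Variable A : set (T1 * T2).
Hypothesis mA : measurable A.

Let xsectionE : (fun x => mu2 [set y | A (x, y)]) = mu2 \o xsection A.
Proof.
apply/funext => x /=; rewrite /xsection; congr (mu2 _).
by apply/seteqP; split => y; rewrite /= inE.
Qed.

Let ysectionE : (fun y => mu1 [set x | A (x, y)]) = mu1 \o ysection A.
Proof.
apply/funext => y /=; rewrite /ysection; congr (mu1 _).
by apply/seteqP; split => x; rewrite /= inE.
Qed.

Lemma measurable_slice1 x : measurable [set y | A (x, y)].
Proof.
have -> : [set y | A (x, y)] = xsection A x.
  by apply/seteqP; split=> y; rewrite /xsection /= inE.
exact: measurable_xsection.
Qed.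

Lemma measurable_fun_measure_slice1 :
  measurable_fun setT (fun x => mu2 [set y | A (x, y)]).
Proof. by rewrite xsectionE; exact: measurable_fun_xsection. Qed.

Lemma measurable_fun_measure_slice2 :
  measurable_fun setT (fun y => mu1 [set x | A (x, y)]).
Proof. by rewrite ysectionE; exact: measurable_fun_ysection. Qed.

Lemma fubini_measure_slices :
  \int[mu1]_x mu2 [set y | A (x, y)] = \int[mu2]_y mu1 [set x | A (x, y)].
Proof.
rewrite xsectionE ysectionE -indic_fubini_tonelli_FE // -indic_fubini_tonelli_GE //.
exact: indic_fubini_tonelli.
Qed.

End measure_slices.

Section lebesgue_measure_R.
Local Open Scope ereal_scope.
Context (R : realType).
Notation lam := (@lebesgue_measure R).

Lemma le_lebesgue_measure {A B : set R} : A `<=` B -> lam A <= lam B.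
Proof.
move=> AB; rewrite /lebesgue_measure /lebesgue_stieltjes_measure /measure_extension.
exact: le_mu_ext.
Qed.

Lemma measurable_set_seq (s : seq R) : measurable [set` s].
Proof.
apply: countable_measurable; first by move=> t; exact: measurable_set1.
exact/finite_set_countable/finite_seq.
Qed.

Lemma le_lebesgue_measure_setU_seq (A B : set R) (s : seq R) : measurable B ->
  A `<=` B `|` [set` s] -> lam A <= lam B.
Proof.
move=> mB AB; have s0 : lam [set` s] = 0.
  exact/countable_lebesgue_measure0/finite_set_countable/finite_seq.
have BsB : lam B + lam [set` s] <= lam B by rewrite s0 adde0.
exact: le_trans (le_lebesgue_measure AB)
  (le_trans (measureU2 lam mB (measurable_set_seq s)) BsB).
Qed.

Lemma lebesgue_measure_itv_oo (a b : R) : (a < b)%R -> lam `]a, b[ = (b - a)%:E.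
Proof. by move=> ab; rewrite lebesgue_measure_itv lte_fin ab -EFinB. Qed.

End lebesgue_measure_R.

Lemma atleast_image (I : finType) (T : eqType) (f : I -> T) (p : pred I)
    (Q : T -> Prop) (n : nat) :
  injective f -> (forall i, p i -> Q (f i)) -> (n <= #|p|)%N -> atleast n Q.
Proof.
move=> f_inj pQ np; exists [seq f i | i in p]; split; last split.
- by rewrite (map_inj_uniq f_inj) enum_uniq.
- by rewrite size_map -cardE.
- by move=> y /mapP [i]; rewrite mem_enum => pi ->; exact: pQ.
Qed.

Lemma atleast_witness (T : eqType) (n : nat) (Q : T -> Prop) :
  (0 < n)%N -> atleast n Q -> exists x, Q x.
Proof.
move=> n0 [[|x s] [_ [ns sQ]]]; last by exists x; apply: sQ; rewrite mem_head.
by move: n0; rewrite lt0n -leqn0 ns.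
Qed.

Lemma leq_size_image (I : finType) (T : eqType) (f : I -> T) (A : {pred I})
    (s : seq T) :
  uniq s -> {subset s <= [seq f i | i in A]} -> (size s <= #|A|)%N.
Proof. by move=> s_uniq s_sub; rewrite cardE -(size_map f); exact: uniq_leq_size. Qed.

Lemma itvcc_meets_itvoo (R : realFieldType) (a1 a2 lo hi : R) :
  a1 <= a2 -> lo < a2 -> a1 < hi -> lo < hi ->
  exists s, lo < s < hi /\ a1 <= s <= a2.
Proof.
move=> a12 lo_a2 a1_hi lo_hi.
have [lo_a1|a1_lo] := ltP lo a1; first by exists a1; rewrite lo_a1 a1_hi lexx a12.
have [a2_hi|hi_a2] := ltP a2 hi; first by exists a2; rewrite lo_a2 a2_hi lexx a12.
by exists ((lo + hi) / 2); split; apply/andP; split; lra.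
Qed.

Section cut_coordinates.
Context {R : realType}.
Implicit Types (g : bool) (e : edge R) (p : pt2 R) (Q : set (pt2 R)).

Definition along g p : R := if g then p.1 else p.2.
Definition across g p : R := if g then p.2 else p.1.

Definition crosses g e (c : R) : bool :=
  (across g e.1 < c < across g e.2) || (across g e.2 < c < across g e.1).

Definition crossing g e (c : R) : R :=
  along g e.1 + (c - across g e.1) * (along g e.2 - along g e.1)
                  / (across g e.2 - across g e.1).

Lemma seg_mkptP g e (s c : R) : seg e (mkpt g s c) <->
  exists l : R, 0 <= l <= 1 /\ s = (1 - l) * along g e.1 + l * along g e.2 /\
    c = (1 - l) * across g e.1 + l * across g e.2.
Proof. by case: g; split=> -[l [l01 [-> ->]]]; exists l. Qed.

Lemma crossing_seg g e (c : R) : crosses g e c -> seg e (mkpt g (crossing g e c) c).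
Proof.
rewrite /crosses /crossing => ec; apply/seg_mkptP.
move: ec; set u1 := across g e.1; set u2 := across g e.2.
set v1 := along g e.1; set v2 := along g e.2; clearbody u1 u2 v1 v2 => ec.
have u21 : u2 - u1 != 0.
  rewrite subr_eq0; apply: contraTneq ec => ->.
  by apply/negP => /orP[] /andP[lt1 lt2]; have := lt_trans lt1 lt2; rewrite ltxx.
exists ((c - u1) / (u2 - u1)); split; last by split; field.
case/orP: ec => /andP[lt1 lt2].
- have u21_gt0 : 0 < u2 - u1 by lra.
  by rewrite divr_ge0 ?ler_pdivrMr ?subr_ge0 //=; lra.
- have u12_gt0 : 0 < u1 - u2 by lra.
  rewrite -mulrNN -invrN !opprB.
  by rewrite divr_ge0 ?ler_pdivrMr ?subr_ge0 //=; lra.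
Qed.

Lemma seg_crossing g e (s c : R) : c != across g e.1 -> c != across g e.2 ->
  seg e (mkpt g s c) -> crosses g e c /\ s = crossing g e c.
Proof.
move=> ce1 ce2 /seg_mkptP [l [/andP [l_ge0 l_le1] [-> c_def]]]; subst c.
rewrite /crosses /crossing; move: ce1 ce2.
set u1 := across g e.1; set u2 := across g e.2.
set v1 := along g e.1; set v2 := along g e.2; clearbody u1 u2 v1 v2 => ce1 ce2.
have l_gt0 : 0 < l.
  by rewrite lt_def l_ge0 andbT; apply: contraNneq ce1 => ->; apply/eqP; ring.
have l_lt1 : l < 1.
  by rewrite lt_def l_le1 andbT; apply: contraNneq ce2 => <-; apply/eqP; ring.
have u21 : u2 - u1 != 0.
  apply: contraNneq ce1 => /eqP; rewrite subr_eq0 => /eqP ->; apply/eqP; ring.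
split; last by field.
have [u21_gt0|u21_le0] := ltP 0 (u2 - u1).
- by apply/orP; left; apply/andP; split; nra.
- have u21_lt0 : u2 - u1 < 0 by rewrite lt_neqAle u21 u21_le0.
  by apply/orP; right; apply/andP; split; nra.
Qed.

Definition along_inf g Q : R := inf (along g @` Q).
Definition along_sup g Q : R := sup (along g @` Q).
Definition across_inf g Q : R := inf (across g @` Q).
Definition across_sup g Q : R := sup (across g @` Q).

Lemma bbox_mkptP g Q (s c : R) : bbox Q (mkpt g s c) <->
  (along_inf g Q <= s <= along_sup g Q) /\ (across_inf g Q <= c <= across_sup g Q).
Proof. by case: g => //=; split=> -[]. Qed.

End cut_coordinates.

Section deep_points.
Variables (R : realType) (E : seq (edge R)) (k : nat) (P : 'I_k -> set (pt2 R)).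
Variables (W : window R) (m M : nat).
Implicit Types (g : bool) (e : edge R) (i : 'I_k) (c t : R) (q : R * R).

Definition in_open_window g c t : bool :=
  (clo g W < c < chi g W) && (alo g W < t < ahi g W).

Lemma intW_mkptP g c t : intW W (mkpt g t c) <-> in_open_window g c t.
Proof.
by case: g; split=> [[h1 h2]|/andP[h1 h2]]; rewrite /in_open_window /= ?h1 ?h2.
Qed.

Definition vertex_across g : seq R :=
  [seq across g e.1 | e <- E] ++ [seq across g e.2 | e <- E].

Lemma across_vertex_neq g e c : e \in E -> c \notin vertex_across g ->
  c != across g e.1 /\ c != across g e.2.
Proof.
move=> eE; rewrite mem_cat negb_or => /andP[c1 c2]; split.
- by apply: contraNneq c1 => ->; exact: map_f.
- by apply: contraNneq c2 => ->; exact: map_f.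
Qed.

Definition crosses_after g c t e : bool :=
  crosses g e c && (t < crossing g e c < ahi g W).
Definition crosses_before g c t e : bool :=
  crosses g e c && (alo g W < crossing g e c < t).

Definition box_after g c t i : bool :=
  [&& across_inf g (P i) <= c <= across_sup g (P i),
      along_inf g (P i) <= along_sup g (P i),
      t < along_sup g (P i) & along_inf g (P i) < ahi g W].
Definition box_before g c t i : bool :=
  [&& across_inf g (P i) <= c <= across_sup g (P i),
      along_inf g (P i) <= along_sup g (P i),
      along_inf g (P i) < t & alo g W < along_sup g (P i)].

(* [q = (c, t)] is the point of along-coordinate [t] on the [g]-cut at [c].  Cuts
   through a vertex of [E] are excluded, so that an edge meets a cut only by crossing it
   properly; [t] is treated likewise so that the perpendicular slices vanish too. *)
Definition deep_edges g q : bool :=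
  [&& q.1 \notin vertex_across g, q.2 \notin vertex_across (~~ g),
      in_open_window g q.1 q.2,
      (m <= #|[pred e : seq_sub E | crosses_after g q.1 q.2 (val e)]|)%N &
      (m <= #|[pred e : seq_sub E | crosses_before g q.1 q.2 (val e)]|)%N].

Definition deep_boxes g q : bool :=
  [&& q.1 \notin vertex_across g, q.2 \notin vertex_across (~~ g),
      in_open_window g q.1 q.2,
      (M <= #|[pred i | box_after g q.1 q.2 i]|)%N &
      (M <= #|[pred i | box_before g q.1 q.2 i]|)%N].

Lemma measurable_fun_crossing g e :
  measurable_fun setT (fun q : R * R => crossing g e q.1).
Proof.
apply: measurable_funD => //; apply: measurable_funM => //.
by apply: measurable_funM => //; apply: measurable_funB => //; exact: measurable_fst.
Qed.

Local Ltac measurable_bool :=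
  repeat first [ apply: measurable_and | apply: measurable_or
  | apply: measurable_neg | apply: measurable_fun_ltr | apply: measurable_fun_ler
  | apply: measurable_fun_mem | apply: measurable_fun_leq
  | (apply: measurable_fun_card => ?) | exact: measurable_fun_crossing
  | exact: measurable_fst | exact: measurable_snd | exact: measurable_cst ].

Lemma measurable_fun_deep_edges g : measurable_fun setT (deep_edges g).
Proof.
by rewrite /deep_edges /in_open_window /crosses_after /crosses_before /crosses;
  measurable_bool.
Qed.

Lemma measurable_fun_deep_boxes g : measurable_fun setT (deep_boxes g).
Proof.
by rewrite /deep_boxes /in_open_window /box_after /box_before; measurable_bool.
Qed.

Lemma deep_edges_dark g c t : deep_edges g (c, t) ->
  intW W (mkpt g t c) /\
  atleast m (fun e => e \in E /\ exists s, t < s < ahi g W /\ seg e (mkpt g s c)) /\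
  atleast m (fun e => e \in E /\ exists s, alo g W < s < t /\ seg e (mkpt g s c)).
Proof.
case/and5P => _ _ /intW_mkptP inW after before; split=> //.
split; [apply: (atleast_image val_inj _ after)|
        apply: (atleast_image val_inj _ before)];
  move=> e /andP[ec e_range]; (split; first exact: valP);
  by exists (crossing g (val e) c); split=> //; exact: crossing_seg.
Qed.

(* The rays defining darkness for [g]-cuts run along [~~ g]-cuts, so this is
   [deep_edges_dark] up to conversion. *)
Lemma mdark_deep_edges g c t : deep_edges (~~ g) (t, c) -> mdark m E W g c t.
Proof. by case: g => /deep_edges_dark. Qed.

Lemma deep_boxes_dark g c t : deep_boxes g (c, t) ->
  intW W (mkpt g t c) /\
  atleast M (fun i => exists s, t < s < ahi g W /\ bbox (P i) (mkpt g s c)) /\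
  atleast M (fun i => exists s, alo g W < s < t /\ bbox (P i) (mkpt g s c)).
Proof.
case/and5P => _ _ inW after before; split; first exact/intW_mkptP.
move/andP: inW => [_ /andP[alo_t t_ahi]].
split; [apply: (atleast_image (f := id) _ _ after)|
        apply: (atleast_image (f := id) _ _ before)] => // i.
- case/and4P => across_c a12 t_a2 a1_ahi.
  have [s [s_range a_s]] := itvcc_meets_itvoo a12 t_a2 a1_ahi t_ahi.
  by exists s; split=> //; apply/bbox_mkptP.
- case/and4P => across_c a12 a1_t alo_a2.
  have [s [s_range a_s]] := itvcc_meets_itvoo a12 alo_a2 a1_t alo_t.
  by exists s; split=> //; apply/bbox_mkptP.
Qed.

Lemma Mrdark_deep_boxes g c t : deep_boxes (~~ g) (t, c) -> Mrdark M P W g c t.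
Proof. by case: g => /deep_boxes_dark. Qed.

Lemma cutE_crossing g c z : c \notin vertex_across g -> cutE E W g c z ->
  exists2 e, e \in E & [/\ crosses g e c, z = crossing g e c & alo g W < z < ahi g W].
Proof.
move=> c_nv [/intW_mkptP /andP[_ z_range] [e [eE ze]]].
have [c1 c2] := across_vertex_neq eE c_nv.
by have [ec z_def] := seg_crossing c1 c2 ze; exists e.
Qed.

Lemma endpts_cutE g c : c \notin vertex_across g ->
  endpts (cutE E W g c) `<=` cutE E W g c.
Proof.
move=> c_nv z [z_cl _].
have cutE_fin : finite_set (cutE E W g c).
  apply: (sub_finite_set _ (finite_seq [seq crossing g e c | e <- E])).
  by move=> y /(cutE_crossing c_nv) [e eE [_ -> _]]; exact: map_f.
have : closed (cutE E W g c).
  exact: (@accessible_finite_set_closed R).1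
    (hausdorff_accessible (@Rhausdorff R)) _ cutE_fin.
by move/closure_id => ->.
Qed.

Lemma mspan_sub_deep_edges g c : (0 < m)%N -> clo g W < c < chi g W ->
  c \notin vertex_across g ->
  mspan m E W g c `<=` [set t | deep_edges g (c, t)] `|`
    [set` [seq crossing g e c | e <- E] ++ vertex_across (~~ g)].
Proof.
move=> m_gt0 c_in c_nv t [below above].
have [t_exc|] := boolP (t \in [seq crossing g e c | e <- E] ++ vertex_across (~~ g)).
  by right.
rewrite mem_cat negb_or => /andP[t_ncross t_nv]; left.
have endpt_crossing z : endpts (cutE E W g c) z ->
    exists2 e, e \in E & [/\ crosses g e c, z = crossing g e c & alo g W < z < ahi g W].
  by move/(endpts_cutE c_nv); exact: cutE_crossing.
have t_neq e : e \in E -> t != crossing g e c.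
  by move=> eE; apply: contraNneq t_ncross => ->; exact: map_f.
have [z1 [/endpt_crossing [_ _ [_ _ /andP[alo_z1 _]]] z1_t]] :=
  atleast_witness m_gt0 below.
have [z2 [/endpt_crossing [_ _ [_ _ /andP[_ z2_ahi]]] t_z2]] :=
  atleast_witness m_gt0 above.
rewrite /deep_edges /in_open_window /= c_nv t_nv c_in.
rewrite (lt_le_trans alo_z1 z1_t) (le_lt_trans t_z2 z2_ahi) /=.
apply/andP; split.
- case: above => s [s_uniq [ms s_above]]; apply: (leq_trans ms).
  apply: (leq_size_image (f := fun e : seq_sub E => crossing g (val e) c) s_uniq).
  move=> z /s_above [/endpt_crossing [e eE [ec ze /andP[_ z_ahi]]] t_z].
  apply/mapP; exists (SeqSub eE) => //.
  by rewrite mem_enum inE /crosses_after ec -ze z_ahi lt_neqAle t_z ze t_neq.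
- case: below => s [s_uniq [ms s_below]]; apply: (leq_trans ms).
  apply: (leq_size_image (f := fun e : seq_sub E => crossing g (val e) c) s_uniq).
  move=> z /s_below [/endpt_crossing [e eE [ec ze /andP[alo_z _]]] z_t].
  apply/mapP; exists (SeqSub eE) => //.
  by rewrite mem_enum inE /crosses_before ec -ze alo_z lt_neqAle z_t ze eq_sym t_neq.
Qed.

Lemma crossed_box g c i : crossed P W g c i ->
  [/\ alo g W < along_inf g (P i) <= along_sup g (P i),
      along_sup g (P i) < ahi g W, across_inf g (P i) <= c <= across_sup g (P i),
      entry_a P W g c i = along_inf g (P i) & entry_b P W g c i = along_sup g (P i)].
Proof.
move=> [[s [/andP[alo_s s_ahi] /bbox_mkptP [/andP[a1_s s_a2] c_across]]] [na nb]].
have a12 : along_inf g (P i) <= along_sup g (P i) by exact: le_trans s_a2.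
have alo_a1 : alo g W < along_inf g (P i).
  rewrite ltNge; apply: contra_notN na => a1_alo.
  by apply/bbox_mkptP; rewrite a1_alo (le_trans alo_s s_a2).
have a2_ahi : along_sup g (P i) < ahi g W.
  rewrite ltNge; apply: contra_notN nb => ahi_a2.
  by apply/bbox_mkptP; rewrite ahi_a2 (le_trans a1_s s_ahi).
have box_itv :
    box_on_cut P W g c i = `[along_inf g (P i), along_sup g (P i)]%classic.
  apply/seteqP; split=> x /=.
    by case=> _ /bbox_mkptP[x_range _]; rewrite in_itv.
  rewrite in_itv /= => /andP[a1_x x_a2].
  split; last by apply/bbox_mkptP; split=> //; apply/andP.
  by rewrite (ltW (lt_le_trans alo_a1 a1_x)) (ltW (le_lt_trans x_a2 a2_ahi)).
by rewrite /entry_a /entry_b box_itv inf_itvcc // sup_itvcc // alo_a1 a12.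
Qed.

Lemma rspan_sub_deep_boxes g c : (0 < M)%N -> clo g W < c < chi g W ->
  c \notin vertex_across g ->
  rspan M P W g c `<=` [set t | deep_boxes g (c, t)] `|`
    [set` [seq along_inf g (P i) | i <- enum 'I_k] ++
          [seq along_sup g (P i) | i <- enum 'I_k] ++ vertex_across (~~ g)].
Proof.
move=> M_gt0 c_in c_nv t [_ [below above]].
have [t_exc|] := boolP (t \in [seq along_inf g (P i) | i <- enum 'I_k] ++
    [seq along_sup g (P i) | i <- enum 'I_k] ++ vertex_across (~~ g)).
  by right.
rewrite mem_cat negb_or mem_cat negb_or => /and3P[t_ninf t_nsup t_nv]; left.
have t_neq_inf i : t != along_inf g (P i).
  by apply: contraNneq t_ninf => ->; exact/map_f/mem_enum.
have t_neq_sup i : t != along_sup g (P i).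
  by apply: contraNneq t_nsup => ->; exact/map_f/mem_enum.
have [i1 [/crossed_box [/andP[alo_a1 _] _ _ -> _] a1_t]] :=
  atleast_witness M_gt0 below.
have [i2 [/crossed_box [_ a2_ahi _ _ ->] t_a2]] :=
  atleast_witness M_gt0 above.
rewrite /deep_boxes /in_open_window /= c_nv t_nv c_in.
rewrite (lt_le_trans alo_a1 a1_t) (le_lt_trans t_a2 a2_ahi) /=.
apply/andP; split.
- case: above => s [s_uniq [Ms s_above]]; apply: (leq_trans Ms).
  rewrite cardE; apply: uniq_leq_size => // i.
  case/s_above => /crossed_box [/andP[_ a12] a2_ahi' c_across _ ->] t_a2'.
  rewrite mem_enum inE /box_after c_across a12 (le_lt_trans a12 a2_ahi').
  by rewrite lt_neqAle t_neq_sup t_a2'.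
- case: below => s [s_uniq [Ms s_below]]; apply: (leq_trans Ms).
  rewrite cardE; apply: uniq_leq_size => // i.
  case/s_below => /crossed_box [/andP[alo_a1' a12] _ c_across -> _] a1_t'.
  rewrite mem_enum inE /box_before c_across a12 (lt_le_trans alo_a1' a12).
  by rewrite lt_neqAle eq_sym t_neq_inf a1_t'.
Qed.

End deep_points.

Section averaging.
Variables (R : realType) (E : seq (edge R)) (k : nat) (P : 'I_k -> set (pt2 R)).
Variables (W : window R) (m M : nat).
Hypotheses (W_wf : window_wf W) (m_gt0 : (0 < m)%N) (M_gt0 : (0 < M)%N).
Implicit Types (g : bool) (c t : R).
Notation lam := (@lebesgue_measure R).

Definition generic_cut g c : bool :=
  (clo g W < c < chi g W) && (c \notin vertex_across E g).

Lemma deep_edges_generic g c t : deep_edges E W m g (c, t) ->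
  generic_cut g c /\ generic_cut (~~ g) t.
Proof.
case/and5P => + + /andP[+ +] _ _; rewrite /generic_cut.
by case: g => /= -> -> -> ->.
Qed.

Lemma deep_boxes_generic g c t : deep_boxes E P W M g (c, t) ->
  generic_cut g c /\ generic_cut (~~ g) t.
Proof.
case/and5P => + + /andP[+ +] _ _; rewrite /generic_cut.
by case: g => /= -> -> -> ->.
Qed.

Local Open Scope ereal_scope.

Definition deep_length g c : \bar R :=
  lam [set t | deep_edges E W m g (c, t)] + lam [set t | deep_boxes E P W M g (c, t)].

Definition perp_deep_length g c : \bar R :=
  lam [set t | deep_edges E W m (~~ g) (t, c)] +
  lam [set t | deep_boxes E P W M (~~ g) (t, c)].

Let measurable_deep_edges g : measurable [set q | deep_edges E W m g q].
Proof. by apply: measurable_set_bool; exact: measurable_fun_deep_edges. Qed.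

Let measurable_deep_boxes g : measurable [set q | deep_boxes E P W M g q].
Proof. by apply: measurable_set_bool; exact: measurable_fun_deep_boxes. Qed.

Lemma measurable_fun_deep_length g : measurable_fun setT (deep_length g).
Proof.
exact: emeasurable_funD (measurable_fun_measure_slice1 lam (measurable_deep_edges g))
  (measurable_fun_measure_slice1 lam (measurable_deep_boxes g)).
Qed.

Lemma measurable_fun_perp_deep_length g : measurable_fun setT (perp_deep_length g).
Proof.
exact: emeasurable_funD
  (measurable_fun_measure_slice2 lam (measurable_deep_edges (~~ g)))
  (measurable_fun_measure_slice2 lam (measurable_deep_boxes (~~ g))).
Qed.

Lemma integral_perp_deep_length g :
  \int[lam]_c perp_deep_length g c = \int[lam]_c deep_length (~~ g) c.
Proof.
have slice_ge0 (A : set R) (x : R) : [set: R] x -> 0 <= lam A.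
  by move=> _; exact: measure_ge0.
have me1 := measurable_fun_measure_slice1 lam (measurable_deep_edges (~~ g)).
have mb1 := measurable_fun_measure_slice1 lam (measurable_deep_boxes (~~ g)).
have me2 := measurable_fun_measure_slice2 lam (measurable_deep_edges (~~ g)).
have mb2 := measurable_fun_measure_slice2 lam (measurable_deep_boxes (~~ g)).
rewrite /perp_deep_length /deep_length !ge0_integralD //.
by rewrite (fubini_measure_slices lam lam (measurable_deep_edges (~~ g)))
  (fubini_measure_slices lam lam (measurable_deep_boxes (~~ g))).
Qed.

Lemma clo_lt_chi g : (clo g W < chi g W)%R.
Proof. by case: W_wf; case: g. Qed.

Let null_slice g c (A : set R) :
  ~~ generic_cut g c -> (forall t, A t -> generic_cut g c) -> lam A = 0.
Proof.
move=> ngen A_gen; rewrite (_ : A = set0) ?measure0 //.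
by apply/seteqP; split=> t // /A_gen; apply/negP.
Qed.

Lemma deep_length_nongeneric g c : ~~ generic_cut g c -> deep_length g c = 0.
Proof.
move=> ngen; rewrite /deep_length.
rewrite (null_slice ngen (A := [set t | deep_edges E W m g (c, t)])) => [|t];
  last by case/deep_edges_generic.
rewrite (null_slice ngen (A := [set t | deep_boxes E P W M g (c, t)])) ?adde0 //.
move=> t.
by case/deep_boxes_generic.
Qed.

Lemma perp_deep_length_nongeneric g c :
  ~~ generic_cut g c -> perp_deep_length g c = 0.
Proof.
move=> ngen; rewrite /perp_deep_length.
rewrite (null_slice ngen (A := [set t | deep_edges E W m (~~ g) (t, c)])) => [|t];
  last by case/deep_edges_generic => _; rewrite negbK.
rewrite (null_slice ngen (A := [set t | deep_boxes E P W M (~~ g) (t, c)])) ?adde0 //.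
move=> t.
by case/deep_boxes_generic => _; rewrite negbK.
Qed.

Lemma perp_deep_length_le_indic g c :
  perp_deep_length g c <=
  ((chi (~~ g) W - clo (~~ g) W) *+ 2)%:E * (\1_`]clo g W, chi g W[ c)%:E.
Proof.
have [gen|ngen] := boolP (generic_cut g c); last first.
  rewrite perp_deep_length_nongeneric // mule_ge0 // lee_fin //.
  by rewrite mulrn_wge0 // subr_ge0 ltW // clo_lt_chi.
rewrite indicE mem_set ?mule1; last by case/andP: gen; rewrite /= in_itv.
have slice_le (A : set R) : (forall t, A t -> generic_cut (~~ g) t) ->
    lam A <= (chi (~~ g) W - clo (~~ g) W)%:E.
  move=> A_gen; rewrite -lebesgue_measure_itv_oo ?clo_lt_chi //.
  by apply: le_lebesgue_measure => t /A_gen /andP[t_in _]; rewrite /= in_itv.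
rewrite mulr2n EFinD; apply: leeD; apply: slice_le => t.
- by case/deep_edges_generic.
- by case/deep_boxes_generic.
Qed.

Lemma perp_deep_length_le_chargeable g c :
  perp_deep_length g c <= chargeable m M E P W g c.
Proof.
apply: leeD; apply: le_lebesgue_measure => t.
- exact: mdark_deep_edges.
- exact: Mrdark_deep_boxes.
Qed.

Lemma spans_le_deep_length g c : generic_cut g c ->
  lam (mspan m E W g c) + lam (rspan M P W g c) <= deep_length g c.
Proof.
case/andP=> c_in c_nv; apply: leeD; apply: le_lebesgue_measure_setU_seq.
- exact: measurable_slice1 (measurable_deep_edges g) c.
- exact: mspan_sub_deep_edges.
- exact: measurable_slice1 (measurable_deep_boxes g) c.
- exact: rspan_sub_deep_boxes.
Qed.

Lemma perp_deep_length_lt g c : ~ favorable m M E P W g c -> generic_cut g c ->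
  perp_deep_length g c < deep_length g c.
Proof.
move=> nfav gen; have /andP[/andP[clo_c c_chi] _] := gen.
have charge_lt : chargeable m M E P W g c <
    lam (mspan m E W g c) + lam (rspan M P W g c).
  rewrite ltNge; apply/negP => le_charge; apply: nfav.
  by split; rewrite // /is_cut (ltW clo_c) (ltW c_chi).
apply: le_lt_trans (perp_deep_length_le_chargeable g c) _.
exact: lt_le_trans charge_lt (spans_le_deep_length gen).
Qed.

Lemma integral_deep_length_lt g : (forall c, ~ favorable m M E P W g c) ->
  \int[lam]_c deep_length (~~ g) c < \int[lam]_c deep_length g c.
Proof.
move=> nfav; rewrite -integral_perp_deep_length.
set K := ((chi (~~ g) W - clo (~~ g) W) *+ 2)%R.
have K_ge0 : (0 <= K)%R by rewrite mulrn_wge0 // subr_ge0 ltW // clo_lt_chi.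
have perp_ge0 c : 0 <= perp_deep_length g c by rewrite adde_ge0.
set I := `]clo g W, chi g W[%classic.
have mD : measurable (I `\` [set` vertex_across E g]).
  exact: measurableD (measurable_itv _) (measurable_set_seq _).
have I_gen : I `<=` I `\` [set` vertex_across E g] `|` [set` vertex_across E g].
  move=> c c_in; have [c_v|c_nv] := boolP (c \in vertex_across E g); first by right.
  by left; split=> //; exact/negP.
have I_meas : lam I = (chi g W - clo g W)%:E.
  exact/lebesgue_measure_itv_oo/clo_lt_chi.
have I_fin : lam I < +oo by rewrite I_meas ltry.
have I_pos : 0 < lam I by rewrite I_meas lte_fin subr_gt0 clo_lt_chi.
apply: ge0_lt_integral.
- exact: measurable_fun_perp_deep_length.
- exact: measurable_fun_deep_length.
- exact: perp_ge0.
- move=> c; rewrite ge0_fin_numE //.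
  by apply: le_lt_trans (perp_deep_length_le_indic g c) _; rewrite -EFinM ltry.
- apply: (integral_lt_pinfty_indic _ _ K_ge0).
  + exact: measurable_itv `]clo g W, chi g W[.
  + exact: I_fin.
  + exact: measurable_fun_perp_deep_length.
  + exact: perp_ge0.
  + exact: perp_deep_length_le_indic.
- move=> c; have [gen|ngen] := boolP (generic_cut g c).
    exact/ltW/perp_deep_length_lt.
  by rewrite perp_deep_length_nongeneric // deep_length_nongeneric.
- exact: mD.
- exact: lt_le_trans I_pos (le_lebesgue_measure_setU_seq mD I_gen).
- move=> c [c_in c_nv]; apply: perp_deep_length_lt => //.
  by apply/andP; split; [move: c_in; rewrite /I /= in_itv|exact/negP].
Qed.

End averaging.

Theorem lemma3p1 (R : realType) (E : seq (edge R)) (k : nat)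
  (P : 'I_k -> set (pt2 R)) (alpha : R) (W0 W : window R) (m M : nat) :
  planar_straight_line E ->
  window_wf W0 -> window_wf W -> subwindow W W0 ->
  0 < alpha ->
  (forall i, region (P i)) ->
  (forall i, fat alpha (P i)) ->
  (forall i j, i != j -> P i `&` P j = set0) ->
  (forall i, P i `<=` inW W0) ->
  (0 < m)%N -> (0 < M)%N ->
  exists (h : bool) (c : R), favorable m M E P W h c.
Proof.
move=> _ _ W_wf _ _ _ _ _ _ m_gt0 M_gt0; apply: contrapT => no_favorable.
have nfav g c : ~ favorable m M E P W g c by move=> fav; apply: no_favorable; exists g, c.
have := lt_trans (integral_deep_length_lt W_wf m_gt0 M_gt0 (nfav true))
  (integral_deep_length_lt W_wf m_gt0 M_gt0 (nfav false)).
by rewrite /= ltxx.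
Qed.
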